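(* Let $A$ and $B$ be nonempty closed subsets of a complete metric space $(X,\rho)$ such that both ordered pairs $(A,B)$ and $(B,A)$ have the $BUC$ property. Let $F:A\times A\to B$ and $G:B\times B\to A$ be such that there exist $\alpha,\beta\in(0,1)$ with $\alpha+\beta<1$ and $$\rho(F(x,y),G(u,v))\le\alpha\rho(x,u)+\beta\rho(y,v)+(1-(\alpha+\beta))\,\mathrm{dist}(A,B)$$ for all $(x,y)\in A\times A$ and $(u,v)\in B\times B$. Then there exist a coupled best proximity point $(x,y)$ of $F$ in $A\times A$ and a coupled best proximity point $(u,v)$ of $G$ in $B\times B$ such that $\rho(x,u)+\rho(y,v)=2\,\mathrm{dist}(A,B)$.
   Context: $\mathrm{dist}(A,B)=\inf\{\rho(a,b):a\in A,\ b\in B\}$. A point $(x,y)\in A\times A$ is a coupled best proximity point of $F:A\times A\to B$ if $\rho(x,F(x,y))=\rho(y,F(y,x))=\mathrm{dist}(A,B)$; similarly $(u,v)\in B\times B$ is a coupled best proximity point of $G:B\times B\to A$ if $\rho(u,G(u,v))=\rho(v,G(v,u))=\mathrm{dist}(A,B)$. The ordered pair $(A,B)$ has the bounded $UC$ property ($BUC$) if for all bounded sequences $\{x_n\},\{z_n\}\subset A$ and every sequence $\{y_n\}\subset B$ with $\lim_n\rho(x_n,y_n)=\lim_n\rho(z_n,y_n)=\mathrm{dist}(A,B)$ one has $\lim_n\rho(x_n,z_n)=0$; the property for $(B,A)$ is defined with the roles of $A$ and $B$ interchanged. *)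

From Stdlib Require Import Reals.
Open Scope R_scope.

Definition is_metric {X : Type} (rho : X -> X -> R) : Prop :=
  (forall x y, 0 <= rho x y) /\
  (forall x y, rho x y = 0 <-> x = y) /\
  (forall x y, rho x y = rho y x) /\
  (forall x y z, rho x z <= rho x y + rho y z).

Definition converges_to {X : Type} (rho : X -> X -> R) (s : nat -> X) (l : X) : Prop :=
  forall eps, eps > 0 -> exists N, forall n, (n >= N)%nat -> rho (s n) l < eps.

Definition cauchy {X : Type} (rho : X -> X -> R) (s : nat -> X) : Prop :=
  forall eps, eps > 0 -> exists N, forall m n, (m >= N)%nat -> (n >= N)%nat ->
    rho (s m) (s n) < eps.

Definition complete_metric {X : Type} (rho : X -> X -> R) : Prop :=
  forall s : nat -> X, cauchy rho s -> exists l, converges_to rho s l.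

Definition metric_closed {X : Type} (rho : X -> X -> R) (A : X -> Prop) : Prop :=
  forall (s : nat -> X) (l : X), (forall n, A (s n)) -> converges_to rho s l -> A l.

Definition nonempty {X : Type} (A : X -> Prop) : Prop := exists x, A x.

(* dist(A,B) = inf { rho a b : a in A, b in B } *)
Definition dist_set {X : Type} (rho : X -> X -> R) (A B : X -> Prop) : R -> Prop :=
  fun r => exists a b, A a /\ B b /\ r = rho a b.

Definition is_inf (E : R -> Prop) (m : R) : Prop :=
  (forall r, E r -> m <= r) /\ (forall m', (forall r, E r -> m' <= r) -> m' <= m).

Definition bounded_seq {X : Type} (rho : X -> X -> R) (s : nat -> X) : Prop :=
  exists x0 M, forall n, rho (s n) x0 <= M.

(* Bounded UC property of the ordered pair (A,B); d stands for dist(A,B). *)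
Definition BUC {X : Type} (rho : X -> X -> R) (A B : X -> Prop) (d : R) : Prop :=
  forall (x z y : nat -> X),
    (forall n, A (x n)) -> (forall n, A (z n)) -> (forall n, B (y n)) ->
    bounded_seq rho x -> bounded_seq rho z ->
    Un_cv (fun n => rho (x n) (y n)) d ->
    Un_cv (fun n => rho (z n) (y n)) d ->
    Un_cv (fun n => rho (x n) (z n)) 0.

From Stdlib Require Import Reals Lra Lia ClassicalEpsilon.
Open Scope R_scope.

(* Work on pairs: (x, y) |-> (F x y, F y x) and its G-analogue.  For the sum
   metric D on X x X, adding the contraction inequality at (x,y,u,v) and at
   (y,x,v,u) shows that the excess D - 2 dist(A,B) shrinks by alpha + beta
   from (p, q) to (F p, G q).  Starting from (x0, x0), the alternating orbit
   b_n = F a_n, a_(n+1) = G b_n then satisfies, coordinatewise,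
   rho(a_m, b_n) <= dist(A,B) + M K^n for all m >= n, K = (alpha+beta)^2.
   The BUC property of (A,B) turns this into the Cauchy property of both
   coordinate sequences of a_n; by completeness and closedness they converge
   to (x, y) in A x A, and passing to the limit in the contraction shows that
   (x, y) is a coupled best proximity point of F.  Finally the contraction at
   (x, y, F x y, F y x) makes (F x y, F y x) one for G.  Only the BUC
   property of (A,B) and the closedness of A are needed. *)

Lemma Un_cv_plus0 (u v : nat -> R) :
  Un_cv u 0 -> Un_cv v 0 -> Un_cv (fun n => u n + v n) 0.
Proof.
  intros Hu Hv. rewrite <- (Rplus_0_r 0). exact (CV_plus u v 0 0 Hu Hv).
Qed.

Lemma Un_cv_scal0 (c : R) (u : nat -> R) :
  Un_cv u 0 -> Un_cv (fun n => c * u n) 0.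
Proof.
  intros Hu eps Heps.
  assert (Hc : 0 < Rabs c + 1) by (pose proof (Rabs_pos c); lra).
  destruct (Hu (eps / (Rabs c + 1))) as [N HN].
  { apply Rlt_gt, Rdiv_lt_0_compat; lra. }
  exists N; intros n Hn. specialize (HN n Hn). unfold Rdist in *.
  rewrite Rminus_0_r in *. rewrite Rabs_mult.
  apply Rle_lt_trans with ((Rabs c + 1) * Rabs (u n)).
  - pose proof (Rabs_pos (u n)). nra.
  - apply Rmult_lt_reg_l with (/ (Rabs c + 1)).
    + apply Rinv_0_lt_compat; lra.
    + rewrite <- Rmult_assoc, Rinv_l by lra. unfold Rdiv in HN. lra.
Qed.

Lemma geometric_null (K M : R) : 0 <= K < 1 -> Un_cv (fun n => M * K ^ n) 0.
Proof.
  intros HK. apply Un_cv_scal0. intros eps Heps.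
  destruct (pow_lt_1_zero K ltac:(rewrite Rabs_right; lra) eps Heps) as [N HN].
  exists N; intros n Hn. unfold Rdist. rewrite Rminus_0_r. now apply HN.
Qed.

Lemma Un_cv_squeeze (u e : nat -> R) (c : R) :
  (forall n, c <= u n <= c + e n) -> Un_cv e 0 -> Un_cv u c.
Proof.
  intros Hue He eps Heps. destruct (He eps Heps) as [N HN].
  exists N; intros n Hn. specialize (HN n Hn). specialize (Hue n).
  unfold Rdist in *. rewrite Rminus_0_r in HN.
  pose proof (Rle_abs (e n)). rewrite Rabs_right by lra. lra.
Qed.

Lemma le_of_le_plus_null (r c : R) (e : nat -> R) :
  (forall n, r <= c + e n) -> Un_cv e 0 -> r <= c.
Proof.
  intros Hr He. apply Rnot_lt_le; intro Hlt.
  destruct (He (r - c) ltac:(lra)) as [N HN]. specialize (HN N (le_n N)).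
  specialize (Hr N). unfold Rdist in HN. rewrite Rminus_0_r in HN.
  pose proof (Rle_abs (e N)). lra.
Qed.

Lemma not_cauchy_witness (X : Type) (rho : X -> X -> R) (p : nat -> X) :
  ~ cauchy rho p ->
  exists e f g, e > 0 /\
    forall N, (f N >= N)%nat /\ (g N >= N)%nat /\ e <= rho (p (f N)) (p (g N)).
Proof.
  intros Hnc. apply not_all_ex_not in Hnc as [e Hnc].
  apply imply_to_and in Hnc as [He Hnc].
  assert (Hfar : forall N, exists mn : nat * nat,
    (fst mn >= N)%nat /\ (snd mn >= N)%nat /\ e <= rho (p (fst mn)) (p (snd mn))).
  { intro N. apply NNPP; intro Hno. apply Hnc. exists N; intros m n Hm Hn.
    apply Rnot_le_lt; intro Hle. apply Hno. now exists (m, n). }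
  destruct (choice _ Hfar) as [h Hh].
  now exists e, (fun N => fst (h N)), (fun N => snd (h N)).
Qed.

Lemma BUC_cauchy (X : Type) (rho : X -> X -> R) (A B : X -> Prop) (d : R)
  (p q : nat -> X) (e : nat -> R) :
  BUC rho A B d -> (forall a b, A a -> B b -> d <= rho a b) ->
  (forall n, A (p n)) -> (forall n, B (q n)) -> Un_cv e 0 ->
  (forall n m, (n <= m)%nat -> rho (p m) (q n) <= d + e n) ->
  cauchy rho p.
Proof.
  intros Hbuc Hd Hp Hq He Hpq. apply NNPP; intro Hnc.
  destruct (not_cauchy_witness X rho p Hnc) as (eps & f & g & Heps & Hfg).
  assert (Hnear : forall h : nat -> nat, (forall N, (h N >= N)%nat) ->
            Un_cv (fun N => rho (p (h N)) (q N)) d).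
  { intros h Hh. apply (Un_cv_squeeze _ e); auto.
    intro N. split; [apply Hd; auto | apply Hpq, Hh]. }
  assert (Hbdd : forall h : nat -> nat, bounded_seq rho (fun N => p (h N))).
  { intro h. exists (q 0%nat), (d + e 0%nat). intro N. apply Hpq. lia. }
  pose proof (Hbuc _ _ q (fun N => Hp (f N)) (fun N => Hp (g N)) Hq
    (Hbdd f) (Hbdd g) (Hnear f (fun N => proj1 (Hfg N)))
    (Hnear g (fun N => proj1 (proj2 (Hfg N))))) as Hclose.
  destruct (Hclose eps Heps) as [N HN]. specialize (HN N (le_n N)).
  destruct (Hfg N) as (_ & _ & Hfar). unfold Rdist in HN.
  rewrite Rminus_0_r in HN. pose proof (Rle_abs (rho (p (f N)) (p (g N)))). lra.
Qed.

Section MetricLimits.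
Variables (X : Type) (rho : X -> X -> R).
Hypothesis rho_nonneg : forall x y, 0 <= rho x y.
Hypothesis rho_sym : forall x y, rho x y = rho y x.
Hypothesis rho_tri : forall x y z, rho x z <= rho x y + rho y z.

Lemma converges_to_null (s : nat -> X) (l : X) :
  converges_to rho s l -> Un_cv (fun n => rho (s n) l) 0.
Proof.
  intros Hs eps Heps. destruct (Hs eps Heps) as [N HN].
  exists N; intros n Hn. unfold Rdist. rewrite Rminus_0_r, Rabs_right.
  - now apply HN.
  - apply Rle_ge, rho_nonneg.
Qed.

Lemma converges_to_shift (s : nat -> X) (l : X) :
  converges_to rho s l -> converges_to rho (fun n => s (S n)) l.
Proof.
  intros Hs eps Heps. destruct (Hs eps Heps) as [N HN].
  exists N; intros n Hn. apply HN. lia.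
Qed.

Lemma dist_limit_le (s : nat -> X) (l w : X) (c : R) (e : nat -> R) :
  converges_to rho s l -> Un_cv e 0 ->
  (forall n, rho (s n) w <= c + e n) -> rho l w <= c.
Proof.
  intros Hs He Hsw.
  apply (le_of_le_plus_null _ _ (fun n => rho (s n) l + e n)).
  - intro n. pose proof (rho_tri l (s n) w) as Htri.
    rewrite (rho_sym l (s n)) in Htri. specialize (Hsw n). lra.
  - apply Un_cv_plus0; [apply converges_to_null|]; assumption.
Qed.

End MetricLimits.

(* The map induced on pairs by H : X -> X -> X, (x, y) |-> (H x y, H y x);
   coupled best proximity points are points where it moves both
   coordinates by exactly dist(A,B). *)
Definition pair_map {X : Type} (H : X -> X -> X) (p : X * X) : X * X :=
  (H (fst p) (snd p), H (snd p) (fst p)).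

Definition pair_dist {X : Type} (rho : X -> X -> R) (p q : X * X) : R :=
  rho (fst p) (fst q) + rho (snd p) (snd q).

Definition in2 {X : Type} (P : X -> Prop) (p : X * X) : Prop := P (fst p) /\ P (snd p).

Lemma pair_map_in2 (X : Type) (P Q : X -> Prop) (H : X -> X -> X) (p : X * X) :
  (forall x y, P x -> P y -> Q (H x y)) -> in2 P p -> in2 Q (pair_map H p).
Proof. intros HPQ [Hx Hy]. split; apply HPQ; assumption. Qed.

Section CoupledIteration.
Variables (X : Type) (rho : X -> X -> R) (A B : X -> Prop) (d : R)
  (F G : X -> X -> X) (alpha beta : R) (p0 : X * X).
Hypothesis rho_nonneg : forall x y, 0 <= rho x y.
Hypothesis rho_sym : forall x y, rho x y = rho y x.
Hypothesis rho_tri : forall x y z, rho x z <= rho x y + rho y z.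
Hypothesis d_lower : forall a b, A a -> B b -> d <= rho a b.
Hypothesis F_maps : forall x y, A x -> A y -> B (F x y).
Hypothesis G_maps : forall u v, B u -> B v -> A (G u v).
Hypothesis alpha_nonneg : 0 <= alpha.
Hypothesis beta_nonneg : 0 <= beta.
Hypothesis alpha_beta_lt1 : alpha + beta < 1.
Hypothesis FG_contraction : forall x y u v, A x -> A y -> B u -> B v ->
  rho (F x y) (G u v) <= alpha * rho x u + beta * rho y v + (1 - (alpha + beta)) * d.
Hypothesis p0_in : in2 A p0.

Lemma pair_dist_sym (p q : X * X) : pair_dist rho p q = pair_dist rho q p.
Proof. unfold pair_dist. now rewrite (rho_sym (fst p)), (rho_sym (snd p)). Qed.

Lemma pair_dist_tri (p q r : X * X) :
  pair_dist rho p r <= pair_dist rho p q + pair_dist rho q r.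
Proof.
  unfold pair_dist. pose proof (rho_tri (fst p) (fst q) (fst r)).
  pose proof (rho_tri (snd p) (snd q) (snd r)). lra.
Qed.

Lemma pair_dist_lower (p q : X * X) : in2 A p -> in2 B q -> 2 * d <= pair_dist rho p q.
Proof.
  intros [Hp1 Hp2] [Hq1 Hq2]. unfold pair_dist.
  pose proof (d_lower _ _ Hp1 Hq1). pose proof (d_lower _ _ Hp2 Hq2). lra.
Qed.

(* Adding the contraction for (x,y,u,v) and (y,x,v,u): on pairs, the excess
   of the sum metric over 2 dist(A,B) shrinks by the factor alpha + beta. *)
Lemma pair_contraction (p q : X * X) : in2 A p -> in2 B q ->
  pair_dist rho (pair_map F p) (pair_map G q) - 2 * d
    <= (alpha + beta) * (pair_dist rho p q - 2 * d).
Proof.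
  intros [Hp1 Hp2] [Hq1 Hq2]. unfold pair_dist, pair_map; simpl.
  pose proof (FG_contraction _ _ _ _ Hp1 Hp2 Hq1 Hq2).
  pose proof (FG_contraction _ _ _ _ Hp2 Hp1 Hq2 Hq1). lra.
Qed.

Fixpoint orbitA (n : nat) : X * X :=
  match n with
  | O => p0
  | S n => pair_map G (pair_map F (orbitA n))
  end.

Definition orbitB (n : nat) : X * X := pair_map F (orbitA n).

Lemma orbitA_in (n : nat) : in2 A (orbitA n).
Proof.
  induction n as [|n IH]; [exact p0_in|].
  apply (pair_map_in2 _ B); [exact G_maps|]. now apply (pair_map_in2 _ A).
Qed.

Lemma orbitB_in (n : nat) : in2 B (orbitB n).
Proof. apply (pair_map_in2 _ A); [exact F_maps | apply orbitA_in]. Qed.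

Lemma orbit_step (m n : nat) :
  pair_dist rho (orbitA (S n)) (orbitB m) - 2 * d
    <= (alpha + beta) * (pair_dist rho (orbitA m) (orbitB n) - 2 * d).
Proof.
  change (orbitA (S n)) with (pair_map G (orbitB n)).
  rewrite pair_dist_sym. apply pair_contraction; [apply orbitA_in | apply orbitB_in].
Qed.

(* Two steps restore the index order and shrink the excess by (alpha+beta)^2. *)
Lemma orbit_decay (n j : nat) :
  pair_dist rho (orbitA (n + j)) (orbitB n) - 2 * d
    <= ((alpha + beta) ^ 2) ^ n * (pair_dist rho (orbitA j) (orbitB 0) - 2 * d).
Proof.
  induction n as [|n IH]; [simpl; lra|].
  pose proof (orbit_step (S n) (n + j)) as Hstep1.
  pose proof (orbit_step (n + j) n) as Hstep2.
  assert (Hk : 0 <= alpha + beta) by lra.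
  change (S n + j)%nat with (S (n + j)).
  change (((alpha + beta) ^ 2) ^ S n) with ((alpha + beta) ^ 2 * ((alpha + beta) ^ 2) ^ n).
  apply Rle_trans with ((alpha + beta) ^ 2 * (pair_dist rho (orbitA (n + j)) (orbitB n) - 2 * d)).
  - apply (Rle_trans _ _ _ Hstep1).
    replace ((alpha + beta) ^ 2 * _) with
      ((alpha + beta) * ((alpha + beta) * (pair_dist rho (orbitA (n + j)) (orbitB n) - 2 * d)))
      by ring.
    now apply Rmult_le_compat_l.
  - rewrite Rmult_assoc. apply Rmult_le_compat_l; [apply pow2_ge_0 | exact IH].
Qed.

(* The excess of a_j over b_0 is bounded uniformly in j: by the triangle
   inequality through b_j and a_1, this excess x satisfies
   x <= c + (alpha + beta) x for a constant c. *)
Lemma orbit_bounded :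
  exists M, forall j, pair_dist rho (orbitA j) (orbitB 0) - 2 * d <= M.
Proof.
  set (c0 := pair_dist rho (orbitA 0) (orbitB 0)).
  set (e0 := pair_dist rho (orbitA 1) (orbitB 0)).
  exists ((c0 + e0) / (1 - (alpha + beta))). intro j.
  set (x := pair_dist rho (orbitA j) (orbitB 0) - 2 * d).
  assert (Hc0 : 2 * d <= c0) by (apply pair_dist_lower; [apply orbitA_in | apply orbitB_in]).
  assert (Hdiag : pair_dist rho (orbitA j) (orbitB j) <= c0).
  { pose proof (orbit_decay j 0) as Hdec. rewrite Nat.add_0_r in Hdec.
    assert (HK : 0 <= (alpha + beta) ^ 2 <= 1) by (split; simpl; nra).
    pose proof (pow_le _ j (proj1 HK)).
    pose proof (pow_incr _ _ j HK) as HK1. rewrite pow1 in HK1.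
    fold c0 in Hdec. nra. }
  assert (Hcross : pair_dist rho (orbitB j) (orbitA 1) - 2 * d <= (alpha + beta) * x).
  { rewrite pair_dist_sym. apply orbit_step. }
  assert (Hx : x * (1 - (alpha + beta)) <= c0 + e0).
  { pose proof (pair_dist_tri (orbitA j) (orbitB j) (orbitB 0)) as Htri1.
    pose proof (pair_dist_tri (orbitB j) (orbitA 1) (orbitB 0)) as Htri2.
    replace (x * (1 - (alpha + beta))) with (x - (alpha + beta) * x) by ring.
    fold e0 in Htri2. unfold x at 1. lra. }
  apply Rmult_le_reg_r with (1 - (alpha + beta)); [lra|].
  unfold Rdiv. rewrite Rmult_assoc, Rinv_l by lra. lra.
Qed.

Lemma orbit_component_bound :
  exists M, forall n m, (n <= m)%nat ->
    rho (fst (orbitA m)) (fst (orbitB n)) <= d + M * ((alpha + beta) ^ 2) ^ n /\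
    rho (snd (orbitA m)) (snd (orbitB n)) <= d + M * ((alpha + beta) ^ 2) ^ n.
Proof.
  destruct orbit_bounded as [M HM]. exists M. intros n m Hnm.
  replace m with (n + (m - n))%nat by lia.
  pose proof (orbit_decay n (m - n)) as Hdec.
  pose proof (pow_le ((alpha + beta) ^ 2) n (pow2_ge_0 _)) as HK.
  pose proof (Rmult_le_compat_l _ _ _ HK (HM (m - n)%nat)) as HKM.
  destruct (orbitA_in (n + (m - n))) as [Ha1 Ha2]. destruct (orbitB_in n) as [Hb1 Hb2].
  pose proof (d_lower _ _ Ha1 Hb1). pose proof (d_lower _ _ Ha2 Hb2).
  unfold pair_dist at 1 in Hdec. split; lra.
Qed.

Lemma proximal_limit (s t u v : nat -> X) (x y : X) (e : nat -> R) :
  A x -> A y -> (forall n, B (u n)) -> (forall n, B (v n)) ->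
  converges_to rho s x -> converges_to rho t y ->
  converges_to rho (fun n => G (u n) (v n)) x -> Un_cv e 0 ->
  (forall n, rho (s n) (u n) <= d + e n) -> (forall n, rho (t n) (v n) <= d + e n) ->
  rho x (F x y) <= d.
Proof.
  intros Hx Hy Hu Hv Hs Ht HGuv He Hsu Htv.
  apply (dist_limit_le X rho rho_nonneg rho_sym rho_tri (fun n => G (u n) (v n)) x
    (F x y) d (fun n => alpha * (rho (s n) x + e n) + beta * (rho (t n) y + e n)));
    [exact HGuv | | ].
  - apply Un_cv_plus0; apply Un_cv_scal0, Un_cv_plus0; try exact He;
      apply converges_to_null; assumption.
  - intro n. rewrite rho_sym.
    pose proof (FG_contraction _ _ _ _ Hx Hy (Hu n) (Hv n)) as Hc.
    assert (Hxu : rho x (u n) <= rho (s n) x + (d + e n)).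
    { rewrite (rho_sym (s n) x). pose proof (rho_tri x (s n) (u n)). specialize (Hsu n). lra. }
    assert (Hyv : rho y (v n) <= rho (t n) y + (d + e n)).
    { rewrite (rho_sym (t n) y). pose proof (rho_tri y (t n) (v n)). specialize (Htv n). lra. }
    pose proof (Rmult_le_compat_l _ _ _ alpha_nonneg Hxu).
    pose proof (Rmult_le_compat_l _ _ _ beta_nonneg Hyv). lra.
Qed.

Lemma proximal_transfer (x y : X) :
  A x -> A y -> rho x (F x y) = d -> rho y (F y x) = d ->
  rho (F x y) (G (F x y) (F y x)) = d.
Proof.
  intros Hx Hy Hxu Hyv. apply Rle_antisym.
  - pose proof (FG_contraction x y _ _ Hx Hy (F_maps _ _ Hx Hy) (F_maps _ _ Hy Hx)).
    rewrite Hxu, Hyv in *. lra.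
  - rewrite rho_sym. apply d_lower; [apply G_maps|]; apply F_maps; assumption.
Qed.

Hypothesis rho_complete : complete_metric rho.
Hypothesis A_closed : metric_closed rho A.
Hypothesis A_B_BUC : BUC rho A B d.

Lemma coupled_best_proximity_F :
  exists x y, A x /\ A y /\ rho x (F x y) = d /\ rho y (F y x) = d.
Proof.
  destruct orbit_component_bound as [M HM].
  set (e := fun n => M * ((alpha + beta) ^ 2) ^ n).
  assert (He : Un_cv e 0) by (apply geometric_null; split; simpl; nra).
  assert (Hcx : cauchy rho (fun n => fst (orbitA n))).
  { apply (BUC_cauchy X rho A B d _ (fun n => fst (orbitB n)) e); auto.
    - intro n; apply orbitA_in. - intro n; apply orbitB_in.
    - intros n m Hnm; apply (HM n m Hnm). }
  assert (Hcy : cauchy rho (fun n => snd (orbitA n))).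
  { apply (BUC_cauchy X rho A B d _ (fun n => snd (orbitB n)) e); auto.
    - intro n; apply orbitA_in. - intro n; apply orbitB_in.
    - intros n m Hnm; apply (HM n m Hnm). }
  destruct (rho_complete _ Hcx) as [x Hx]. destruct (rho_complete _ Hcy) as [y Hy].
  assert (Ax : A x) by (apply (A_closed _ _ (fun n => proj1 (orbitA_in n)) Hx)).
  assert (Ay : A y) by (apply (A_closed _ _ (fun n => proj2 (orbitA_in n)) Hy)).
  assert (Hdiag : forall n, rho (fst (orbitA n)) (fst (orbitB n)) <= d + e n /\
                            rho (snd (orbitA n)) (snd (orbitB n)) <= d + e n).
  { intro n. exact (HM n n (le_n n)). }
  assert (Hxu : rho x (F x y) <= d).
  { apply (proximal_limit (fun n => fst (orbitA n)) (fun n => snd (orbitA n))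
      (fun n => fst (orbitB n)) (fun n => snd (orbitB n)) x y e); auto.
    - intro n; apply orbitB_in. - intro n; apply orbitB_in.
    - exact (converges_to_shift X rho _ _ Hx).
    - intro n; apply Hdiag. - intro n; apply Hdiag. }
  assert (Hyv : rho y (F y x) <= d).
  { apply (proximal_limit (fun n => snd (orbitA n)) (fun n => fst (orbitA n))
      (fun n => snd (orbitB n)) (fun n => fst (orbitB n)) y x e); auto.
    - intro n; apply orbitB_in. - intro n; apply orbitB_in.
    - exact (converges_to_shift X rho _ _ Hy).
    - intro n; apply Hdiag. - intro n; apply Hdiag. }
  exists x, y. repeat split; auto; apply Rle_antisym; auto; apply d_lower; auto.
Qed.

End CoupledIteration.

Theorem theorem35 (X : Type) (rho : X -> X -> R) (A B : X -> Prop) (d : R)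
  (F G : X -> X -> X) (alpha beta : R) :
  is_metric rho -> complete_metric rho ->
  nonempty A -> nonempty B -> metric_closed rho A -> metric_closed rho B ->
  is_inf (dist_set rho A B) d ->
  BUC rho A B d -> BUC rho B A d ->
  (forall x y, A x -> A y -> B (F x y)) ->
  (forall u v, B u -> B v -> A (G u v)) ->
  0 < alpha < 1 -> 0 < beta < 1 -> alpha + beta < 1 ->
  (forall x y u v, A x -> A y -> B u -> B v ->
     rho (F x y) (G u v) <= alpha * rho x u + beta * rho y v + (1 - (alpha + beta)) * d) ->
  exists x y u v,
    A x /\ A y /\ B u /\ B v /\
    rho x (F x y) = d /\ rho y (F y x) = d /\
    rho u (G u v) = d /\ rho v (G v u) = d /\
    rho x u + rho y v = 2 * d.
Proof.
  intros (Hnonneg & _ & Hsym & Htri) Hcomplete [x0 Hx0] _ HclA _ Hinf HbucAB _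
    HF HG Halpha Hbeta Hab Hcontr.
  assert (Hlower : forall a b, A a -> B b -> d <= rho a b).
  { intros a b Ha Hb. apply (proj1 Hinf). now exists a, b. }
  destruct (coupled_best_proximity_F X rho A B d F G alpha beta (x0, x0)
    Hnonneg Hsym Htri Hlower HF HG ltac:(lra) ltac:(lra) Hab Hcontr
    (conj Hx0 Hx0) Hcomplete HclA HbucAB) as (x & y & Hx & Hy & Hxu & Hyv).
  pose proof (proximal_transfer X rho A B d F G alpha beta Hsym Hlower HF HG Hcontr)
    as Htransfer.
  exists x, y, (F x y), (F y x).
  repeat split; auto; lra.
Qed.
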